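(* Let $(\mathsf{X},\mathscr{X})$ be a measurable space and $P$ a Markov kernel on $\mathsf{X}\times\mathscr{X}$. For any probability measures $\xi$ and $\xi'$ on $(\mathsf{X},\mathscr{X})$, any integer $n\geqslant 1$, any $c=(c_0,\ldots,c_{n-1})\in \mathbb{R}_+^n$ and any measurable $h:\mathsf{X}^n\to\mathbb{R}$ satisfying $|h(x)-h(y)|\leqslant \sum_{i=0}^{n-1}c_i\mathbf{1}_{\{x_i\neq y_i\}}$ for all $x=(x_0,\ldots,x_{n-1}),y=(y_0,\ldots,y_{n-1})\in\mathsf{X}^n$, we have \[ \big|\mathbb{E}_\xi[h(X_0,\ldots,X_{n-1})]-\mathbb{E}_{\xi'}[h(X_0,\ldots,X_{n-1})]\big|\leqslant 2\sum_{i=0}^{n-1}c_i\, \mathrm{d}_{\mathrm{TV}}(\xi P^i,\xi'P^i)\;. \]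
   Context: For a probability measure $\xi$ on $(\mathsf{X},\mathscr{X})$, $\mathbb{P}_\xi$ denotes the law of the Markov chain $(X_k)_{k\geqslant 0}$ (canonical process on $\mathsf{X}^{\mathbb{Z}_+}$) with Markov kernel $P$ and initial distribution $\xi$, and $\mathbb{E}_\xi$ its expectation. $\xi P^i$ is the law of $X_i$ under $\mathbb{P}_\xi$. $\mathrm{d}_{\mathrm{TV}}(\mu,\nu)=\sup_{A\in\mathscr{X}}|\mu(A)-\nu(A)|$ denotes the total variation distance between probability measures. *)

From HB Require Import structures.
From mathcomp Require Import all_boot all_order all_algebra.
From mathcomp Require Import all_classical all_reals all_analysis.
Set Implicit Arguments. Unset Strict Implicit. Unset Printing Implicit Defensive.
Import Order.TTheory GRing.Theory Num.Theory.
Local Open Scope classical_set_scope.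
Local Open Scope ring_scope.
Local Open Scope ereal_scope.

Section markov_chain.
Context (d : measure_display) (X : measurableType d) (R : realType).
Variable P : R.-pker X ~> X.

(* [cont k f s x]: given the already visited states [s] and the current
   state [x], integrate [f] (a function of the whole path) against the
   next [k] transitions of the chain with kernel [P]. *)
Fixpoint cont (k : nat) (f : seq X -> \bar R) (s : seq X) (x : X) : \bar R :=
  match k with
  | 0 => f (rcons s x)
  | k'.+1 => \int[P x]_y cont k' f (rcons s x) y
  end.

(* E_xi[ f (X_0, ..., X_k) ] for the canonical Markov chain with kernel P
   and initial distribution xi (finite-dimensional marginal of P_xi). *)
Definition chainE (xi : probability X R) (k : nat) (f : seq X -> \bar R)
  : \bar R := \int[xi]_x cont k f [::] x.

(* xi P^i : the law of X_i under P_xi, as a set function. *)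
Definition lawX (xi : probability X R) (i : nat) (A : set X) : \bar R :=
  chainE xi i (fun s => (\1_A (last point s))%:E).

(* E_xi[ h (X_0, ..., X_{n-1}) ] for h : X^n -> R (n >= 1). *)
Definition chainE_tuple (xi : probability X R) (n : nat)
  (h : n.-tuple X -> R) : \bar R :=
  chainE xi n.-1 (fun s => (h (insubd [tuple of nseq n point] s))%:E).

End markov_chain.

Definition dTV (d : measure_display) (X : measurableType d) (R : realType)
  (mu nu : set X -> \bar R) : \bar R :=
  ereal_sup [set `| mu A - nu A | | A in @measurable d X].

From HB Require Import structures.
From mathcomp Require Import all_boot all_order all_algebra.
From mathcomp Require Import all_classical all_reals all_analysis.
From mathcomp Require Import lra measurable_realfun.
Import Order.TTheory GRing.Theory Num.Theory.
Local Open Scope classical_set_scope.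
Local Open Scope ring_scope.
Set Implicit Arguments. Unset Strict Implicit. Unset Printing Implicit Defensive.

(* Freeze the first i arguments of h to a fixed point to get h_i, so that
   h_0 = h and h_n is constant, and telescope over the differences
   h_i - h_{i+1}.  Each difference is bounded by c_i and ignores the first i
   coordinates, so by the Markov property its expectation under P_xi is the
   integral against xi P^i of a function G_i with |G_i| <= c_i.  Finally
   |int G d(mu) - int G d(nu)| <= 2 sup|G| d_TV(mu, nu): sandwich G between
   staircase functions whose steps are indicators of level sets of G, for which
   the bound is immediate, and refine the staircase. *)

Section bounded_Rintegral.
Context d (T : measurableType d) (R : realType).
Variable mu : {measure set T -> \bar R}.
Hypothesis mu1 : mu [set: T] = 1%E.

Definition bounded_measurable (f : T -> R) :=
  measurable_fun [set: T] f /\ exists B : R, forall x, `|f x| <= B.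

Lemma bounded_measurable_cst c : bounded_measurable (fun _ => c).
Proof. by split; [exact: measurable_cst | exists `|c|]. Qed.

Lemma bounded_measurableZ a f :
  bounded_measurable f -> bounded_measurable (fun x => a * f x).
Proof.
move=> [mf [B hB]]; split; first exact: measurable_funM.
by exists (`|a| * B) => x; rewrite normrM ler_wpM2l.
Qed.

Lemma bounded_measurableD f g :
  bounded_measurable f -> bounded_measurable g ->
  bounded_measurable (fun x => f x + g x).
Proof.
move=> [mf [B1 hB1]] [mg [B2 hB2]]; split; first exact: measurable_funD.
by exists (B1 + B2) => x; apply: le_trans (ler_normD _ _) (lerD _ _).
Qed.

Lemma bounded_measurable_integrable f :
  bounded_measurable f -> mu.-integrable [set: T] (EFin \o f).
Proof.
move=> [mf [B hB]]; apply: measurable_bounded_integrable => //.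
  by rewrite mu1 ltry.
exists B; split; first by rewrite num_real.
by move=> x Bx y _; apply: le_trans (hB y) (ltW Bx).
Qed.

Lemma Rintegral_bounded_measurable f : bounded_measurable f ->
  (Rintegral mu [set: T] f)%:E = (\int[mu]_x (f x)%:E)%E.
Proof.
move=> bf; rewrite /Rintegral fineK //.
exact: integrable_fin_num (bounded_measurable_integrable bf).
Qed.

Lemma Rintegral_cst1 c : Rintegral mu [set: T] (fun _ => c) = c.
Proof. by rewrite Rintegral_cst // mu1 mulr1. Qed.

Lemma Rintegral_affine a f g :
  bounded_measurable f -> bounded_measurable g ->
  Rintegral mu [set: T] (fun x => a * f x + g x) =
  a * Rintegral mu [set: T] f + Rintegral mu [set: T] g.
Proof.
move=> bf bg; have baf := bounded_measurableZ a bf.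
rewrite RintegralD ?RintegralZl //; exact: bounded_measurable_integrable.
Qed.

Lemma le_Rintegral_bounded f g :
  bounded_measurable f -> bounded_measurable g -> (forall x, f x <= g x) ->
  Rintegral mu [set: T] f <= Rintegral mu [set: T] g.
Proof.
move=> bf bg fg.
by apply: le_Rintegral => //; exact: bounded_measurable_integrable.
Qed.

Lemma bounded_measurable_indic (A : set T) : measurable A ->
  bounded_measurable (\1_A : T -> R).
Proof.
move=> mA; split; first exact: measurable_indic.
by exists 1 => x; rewrite indicE; case: (_ \in _); rewrite ?normr1 ?normr0.
Qed.

End bounded_Rintegral.

Lemma dTV_ge0 d (X : measurableType d) (R : realType) (mu nu : set X -> \bar R) :
  (0 <= dTV mu nu)%E.
Proof.
apply: le_trans (_ : `|mu set0 - nu set0| <= _)%E; first exact: abse_ge0.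
by apply: ereal_sup_ubound; exists set0.
Qed.

Section staircase.
Variable R : realFieldType.
Implicit Types (u v C del : R) (N : nat).

Definition staircase N u : R := \sum_(j < N) ((j.+1)%:R < u)%R%:R.

Lemma staircase_le_nat N u : staircase N u <= N%:R.
Proof.
elim: N => [|N IH]; first by rewrite /staircase big_ord0.
by rewrite /staircase big_ord_recr /= -natr1 lerD //; case: (_ < _).
Qed.

Lemma staircase_full N u : N%:R < u -> staircase N u = N%:R.
Proof.
elim: N => [|N IH] Nu; first by rewrite /staircase big_ord0.
rewrite /staircase big_ord_recr /= -/(staircase N u) IH ?Nu ?natr1 //.
by apply: le_lt_trans Nu; rewrite ler_nat.
Qed.

Lemma staircase_le N u : 0 <= u -> staircase N u <= u.
Proof.
move=> u0; elim: N => [|N IH]; first by rewrite /staircase big_ord0.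
rewrite /staircase big_ord_recr /= -/(staircase N u); case: ltP => [Nu|_].
  apply: le_trans (ltW Nu); rewrite -natr1 lerD2r; exact: staircase_le_nat.
by rewrite addr0.
Qed.

Lemma staircase_ge N u : u <= N%:R -> u - 1 <= staircase N u.
Proof.
elim: N => [|N IH] uN.
  by rewrite /staircase big_ord0 lerBlDr add0r (le_trans uN) // ler01.
rewrite /staircase big_ord_recr /= -/(staircase N u).
have [uN'|Nu] := lerP u N%:R; first by rewrite (le_trans (IH uN')) // lerDl.
by rewrite staircase_full // lerBlDr (le_trans uN) // -natr1 lerD2r lerDl.
Qed.

(* Rounding [v] in [-C, C] down to the grid [-C + del * j]. *)
Lemma staircase_approx N C del v : 0 < del -> 2 * C <= N%:R * del ->
  `|v| <= C ->
  - C + del * staircase N ((v + C) / del) <= v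
  <= - C + del * staircase N ((v + C) / del) + del.
Proof.
move=> del0 CN vC; set u := (v + C) / del.
have [vC1 vC2] : - C <= v /\ v <= C by move: vC; rewrite ler_norml => /andP.
have du : del * u = v + C by rewrite /u mulrC divfK // gt_eqF.
have u0 : 0 <= u by rewrite /u divr_ge0 ?(ltW del0) // -lerBlDr sub0r.
have uN : u <= N%:R by rewrite /u ler_pdivrMr //; lra.
have := ler_wpM2l (ltW del0) (staircase_le N u0).
have := ler_wpM2l (ltW del0) (staircase_ge uN).
rewrite mulrBr mulr1; lra.
Qed.

End staircase.

Section path_functions.
Context d (X : measurableType d) (R : realType).
Variable P : R.-pker X ~> X.
Local Notation z := (point : X).
Implicit Types (f g : seq X -> R) (p q : seq X).

Definition tuple_measurable f :=
  forall m, measurable_fun [set: m.-tuple X] (fun t : m.-tuple X => f t).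

Definition admissible f :=
  tuple_measurable f /\ exists B : R, forall p, `|f p| <= B.

Lemma measurable_nth_tuple m j :
  measurable_fun [set: m.-tuple X] (fun t : m.-tuple X => nth z t j).
Proof.
have [jm|mj] := ltnP j m.
  rewrite (_ : (fun t => _) = (fun t => tnth t (Ordinal jm))).
    exact: measurable_tnth.
  by apply/funext => t; rewrite (tnth_nth z).
rewrite (_ : (fun t => _) = cst z); first exact: measurable_cst.
by apply/funext => t; rewrite nth_default // size_tuple.
Qed.

Lemma measurable_last_tuple m :
  measurable_fun [set: m.-tuple X] (fun t : m.-tuple X => last z t).
Proof.
rewrite (_ : (fun t => _) = (fun t : m.-tuple X => nth z t m.-1)).
  exact: measurable_nth_tuple.
by apply/funext => t; rewrite -nth_last size_tuple.
Qed.

Lemma measurable_fun_tuple d' (T : measurableType d') m (F : T -> m.-tuple X) :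
  (forall j, (j < m)%N -> measurable_fun [set: T] (fun x => nth z (F x) j)) ->
  measurable_fun [set: T] F.
Proof.
move=> mF; apply/measurable_fun_tnthP => j.
rewrite (_ : _ \o F = (fun x => nth z (F x) j)); first exact: mF.
by apply/funext => x /=; rewrite (tnth_nth z).
Qed.

Lemma measurable_rcons_tuple m :
  measurable_fun [set: m.-tuple X * X]
    (fun ty : m.-tuple X * X => [tuple of rcons ty.1 ty.2]).
Proof.
apply: measurable_fun_tuple => j /=; rewrite ltnS leq_eqVlt => /predU1P[->|jm].
  rewrite (_ : (fun ty => _) = snd); first exact: measurable_snd.
  by apply/funext => ty; rewrite nth_rcons size_tuple ltnn eqxx.
rewrite (_ : (fun ty => _) = (fun ty : m.-tuple X * X => nth z ty.1 j)).
  exact: measurableT_comp (measurable_nth_tuple j) measurable_fst.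
by apply/funext => ty; rewrite nth_rcons size_tuple jm.
Qed.

Lemma tuple_measurable_rcons f m : tuple_measurable f ->
  measurable_fun [set: m.-tuple X * X]
    (fun ty : m.-tuple X * X => f (rcons ty.1 ty.2)).
Proof.
by move=> mf; exact: (measurableT_comp (mf m.+1) (@measurable_rcons_tuple m)).
Qed.

Lemma admissible_rcons f p : admissible f ->
  bounded_measurable (fun y => f (rcons p y)).
Proof.
move=> [mf [B hB]]; split; last by exists B.
exact: measurable_fun_pair2 (in_tuple p) (tuple_measurable_rcons mf).
Qed.

Lemma admissible_cst c : admissible (fun _ => c).
Proof. by split; [move=> m; exact: measurable_cst | exists `|c|]. Qed.

Lemma admissible_affine a f g : admissible f -> admissible g ->
  admissible (fun p => a * f p + g p).
Proof.
move=> [mf [B1 hB1]] [mg [B2 hB2]]; split.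
  by move=> m; apply: measurable_funD (mg m); exact: measurable_funM (mf m).
exists (`|a| * B1 + B2) => p; apply: le_trans (ler_normD _ _) _.
by rewrite normrM lerD // ler_wpM2l.
Qed.

Definition kernel_last m (t : m.-tuple X) : {measure set X -> \bar R} :=
  P (last z t).

Lemma measurable_kernel_last m U : measurable U ->
  measurable_fun [set: m.-tuple X] ((@kernel_last m) ^~ U).
Proof.
move=> mU.
exact: (measurableT_comp (measurable_kernel P U mU) (@measurable_last_tuple m)).
Qed.

HB.instance Definition _ m :=
  isKernel.Build _ _ _ _ R (@kernel_last m) (@measurable_kernel_last m).
HB.instance Definition _ m :=
  Kernel_isProbability.Build _ _ _ _ R (@kernel_last m)
    (fun t => @prob_kernel _ _ _ _ _ P (last z t)).

Definition step f p : R :=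
  Rintegral (P (last z p)) [set: X] (fun y => f (rcons p y)).

Lemma tuple_measurable_step f : admissible f -> tuple_measurable (step f).
Proof.
(* Measurability of kernel integrals is only available for nonnegative
   integrands, hence the shift by the bound [B]. *)
move=> af m; have [mf [B hB]] := af.
pose k (ty : m.-tuple X * X) := (f (rcons ty.1 ty.2) + B)%:E.
have k0 ty : (0 <= k ty)%E.
  rewrite lee_fin -lerBlDr sub0r.
  by have := hB (rcons ty.1 ty.2); rewrite ler_norml => /andP[].
have mk : measurable_fun [set: m.-tuple X]
    (fun t => \int[kernel_last t]_y k (t, y))%E.
  apply: (measurable_fun_integral_finite_kernel _ (@kernel_last m)) => //.
  apply/measurable_EFinP/measurable_funD; last exact: measurable_cst.
  exact: tuple_measurable_rcons.
rewrite (_ : (fun t => _) =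
    (fun t => fine (\int[kernel_last t]_y k (t, y))%E - B)).
  apply: measurable_funB; last exact: measurable_cst.
  exact: measurableT_comp mk.
apply/funext => t; have Pt1 : P (last z t) [set: X] = 1%E := prob_kernel _.
have bft := admissible_rcons t af; have bB := bounded_measurable_cst X B.
rewrite /k -Rintegral_bounded_measurable //=; last exact: bounded_measurableD.
by rewrite RintegralD ?Rintegral_cst1 ?addrK //;
  exact: bounded_measurable_integrable.
Qed.

Lemma step_affine a f g p : admissible f -> admissible g ->
  step (fun q => a * f q + g q) p = a * step f p + step g p.
Proof.
move=> af ag; apply: Rintegral_affine; first exact: prob_kernel.
- exact: admissible_rcons.
- exact: admissible_rcons.
Qed.

Lemma step_cst c p : step (fun _ => c) p = c.
Proof. exact/Rintegral_cst1/prob_kernel. Qed.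

Lemma le_step f g p : admissible f -> admissible g -> (forall q, f q <= g q) ->
  step f p <= step g p.
Proof.
move=> af ag fg; apply: le_Rintegral_bounded; first exact: prob_kernel.
- exact: admissible_rcons.
- exact: admissible_rcons.
- by move=> y; exact: fg.
Qed.

Lemma step_bound f C p : admissible f -> (forall q, `|f q| <= C) ->
  `|step f p| <= C.
Proof.
move=> af fC; rewrite ler_norml; apply/andP; split.
  rewrite -[X in X <= _](step_cst (- C) p); apply: le_step => //.
    exact: admissible_cst.
  by move=> q; have := fC q; rewrite ler_norml => /andP[].
rewrite -[X in _ <= X](step_cst C p); apply: le_step => //.
  exact: admissible_cst.
by move=> q; have := fC q; rewrite ler_norml => /andP[].
Qed.

Lemma admissible_step f : admissible f -> admissible (step f).
Proof.
move=> af; split; first exact: tuple_measurable_step.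
by have [_ [B hB]] := af; exists B => p; exact: step_bound.
Qed.

Definition steps k f := iter k step f.

Lemma admissible_steps k f : admissible f -> admissible (steps k f).
Proof. by move=> af; elim: k => //= k; exact: admissible_step. Qed.

Lemma steps_affine k a f g p : admissible f -> admissible g ->
  steps k (fun q => a * f q + g q) p = a * steps k f p + steps k g p.
Proof.
move=> af ag; elim: k p => // k IH p /=.
rewrite -/(steps k _) (_ : steps k _ = fun q => a * steps k f q + steps k g q).
  by apply: step_affine; exact: admissible_steps.
by apply/funext => q; exact: IH.
Qed.

Lemma steps_cst k c p : steps k (fun _ => c) p = c.
Proof.
elim: k p => // k IH p /=.
by rewrite -/(steps k _) (_ : steps k _ = fun _ => c) ?step_cst //; exact/funext.
Qed.

Lemma le_steps k f g p : admissible f -> admissible g ->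
  (forall q, f q <= g q) -> steps k f p <= steps k g p.
Proof.
move=> af ag fg; elim: k p => [|k IH] p /=; first exact: fg.
by apply: le_step => //; exact: admissible_steps.
Qed.

Lemma steps_bound k f C p : admissible f -> (forall q, `|f q| <= C) ->
  `|steps k f p| <= C.
Proof.
move=> af fC; elim: k p => [|k IH] p /=; first exact: fC.
by apply: step_bound => //; exact: admissible_steps.
Qed.

Lemma steps_local k f g p :
  (forall q, size q = (size p + k)%N -> f q = g q) -> steps k f p = steps k g p.
Proof.
elim: k p => [|k IH] p fg /=; first by apply: fg; rewrite addn0.
rewrite /step; congr Rintegral; apply/funext => y; apply: IH => q.
by rewrite size_rcons addSnnS; exact: fg.
Qed.

(* The kernels integrated against only see the last state, which lies in the
   common suffix [q]. *)
Lemma steps_prefix_indep k f j :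
  (forall p p' q, size p = j -> size p' = j -> f (p ++ q) = f (p' ++ q)) ->
  forall p p' q, size p = j -> size p' = j -> q != [::] ->
  steps k f (p ++ q) = steps k f (p' ++ q).
Proof.
move=> fj; elim: k => [|k IH] p p' [//|x q] hp hp' _ /=; first exact: fj.
rewrite /step !last_cat /=; congr Rintegral; apply/funext => y.
by rewrite !rcons_cat; apply: IH.
Qed.

Lemma cont_steps k f (g : seq X -> \bar R) s x : admissible f ->
  (forall p, size p = (size s + k).+1 -> g p = (f p)%:E) ->
  cont P k g s x = (steps k f (rcons s x))%:E.
Proof.
move=> af; elim: k s x => [|k IH] s x fg /=.
  by rewrite fg // size_rcons addn0.
rewrite -/(steps k f) /step last_rcons Rintegral_bounded_measurable.
- apply: eq_integral => y _; apply: IH => p.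
  by rewrite size_rcons addSnnS => /fg.
- exact: prob_kernel.
- exact/admissible_rcons/admissible_steps.
Qed.

Definition chainR (xi : probability X R) k f : R :=
  Rintegral xi [set: X] (fun x => steps k f [:: x]).

Lemma bounded_measurable_steps_init k f : admissible f ->
  bounded_measurable (fun x => steps k f [:: x]).
Proof.
move=> af; have [mf [B hB]] := admissible_steps k af; split; last by exists B.
have m1 : measurable_fun [set: X] (fun x : X => [tuple x]).
  by apply: measurable_fun_tuple => -[|//] _; exact: measurable_id.
exact: measurableT_comp (mf 1%N) m1.
Qed.

Section chainR.
Variable xi : probability X R.

Lemma chainR_affine k a f g : admissible f -> admissible g ->
  chainR xi k (fun p => a * f p + g p) = a * chainR xi k f + chainR xi k g.
Proof.
move=> af ag; rewrite /chainR -Rintegral_affine; last 3 first.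
- exact: probability_setT.
- exact: bounded_measurable_steps_init.
- exact: bounded_measurable_steps_init.
by congr Rintegral; apply/funext => x; exact: steps_affine.
Qed.

Lemma chainR_cst k c : chainR xi k (fun _ => c) = c.
Proof.
rewrite /chainR (_ : (fun x => _) = fun _ => c); last first.
  by apply/funext => x; exact: steps_cst.
exact/Rintegral_cst1/probability_setT.
Qed.

Lemma le_chainR k f g : admissible f -> admissible g ->
  (forall q, f q <= g q) -> chainR xi k f <= chainR xi k g.
Proof.
move=> af ag fg; apply: le_Rintegral_bounded; first exact: probability_setT.
- exact: bounded_measurable_steps_init.
- exact: bounded_measurable_steps_init.
- by move=> x; exact: le_steps.
Qed.

Lemma chainE_chainR k f (g : seq X -> \bar R) : admissible f ->
  (forall p, size p = k.+1 -> g p = (f p)%:E) ->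
  chainE P xi k g = (chainR xi k f)%:E.
Proof.
move=> af fg; rewrite /chainE /chainR Rintegral_bounded_measurable.
- by apply: eq_integral => x _; exact: cont_steps.
- exact: probability_setT.
- exact: bounded_measurable_steps_init.
Qed.

End chainR.

Lemma admissible_last (G : X -> R) : bounded_measurable G ->
  admissible (fun p => G (last z p)).
Proof.
move=> [mG [B hB]]; split; last by exists B.
by move=> m; exact: (measurableT_comp mG (@measurable_last_tuple m)).
Qed.

Lemma lawX_chainR xi i (A : set X) : measurable A ->
  lawX P xi i A = (chainR xi i (fun p => \1_A (last z p)))%:E.
Proof.
move=> mA; apply: chainE_chainR => //.
exact/admissible_last/bounded_measurable_indic.
Qed.

Section lincomb.
Variables (c : R) (a : nat -> R) (F : nat -> seq X -> R).
Hypothesis aF : forall j, admissible (F j).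

Let lincomb_recr (b : nat -> R) N :
  c + \sum_(j < N.+1) b j = b N + (c + \sum_(j < N) b j).
Proof. by rewrite big_ord_recr /= addrA addrC. Qed.

Lemma admissible_lincomb N :
  admissible (fun p => c + \sum_(j < N) a j * F j p).
Proof.
elim: N => [|N IH].
  under eq_fun do rewrite big_ord0 addr0; exact: admissible_cst.
rewrite (_ : (fun p => _) =
    fun p => a N * F N p + (c + \sum_(j < N) a j * F j p)).
  exact: admissible_affine.
by apply/funext => p; rewrite (lincomb_recr (fun j => a j * F j p)).
Qed.

Lemma chainR_lincomb xi k N :
  chainR xi k (fun p => c + \sum_(j < N) a j * F j p) =
  c + \sum_(j < N) a j * chainR xi k (F j).
Proof.
elim: N => [|N IH].
  by under eq_fun do rewrite big_ord0 addr0; rewrite chainR_cst big_ord0 addr0.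
rewrite (_ : (fun p => _) =
    fun p => a N * F N p + (c + \sum_(j < N) a j * F j p)).
  rewrite chainR_affine ?IH //; last exact: admissible_lincomb.
  by rewrite (lincomb_recr (fun j => a j * chainR xi k (F j))).
by apply/funext => p; rewrite (lincomb_recr (fun j => a j * F j p)).
Qed.

End lincomb.

Lemma chainR_sandwich xi xi' k s g e : admissible s -> admissible g ->
  (forall p, s p <= g p <= s p + e) ->
  `|chainR xi k g - chainR xi' k g| <= `|chainR xi k s - chainR xi' k s| + e.
Proof.
move=> as_ ag sg.
have lo xi0 : chainR xi0 k s <= chainR xi0 k g.
  by apply: le_chainR => // p; have /andP[] := sg p.
have hi xi0 : chainR xi0 k g <= chainR xi0 k s + e.
  have ase := admissible_affine 1 as_ (admissible_cst e).
  have := @le_chainR xi0 k _ _ ag ase.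
  rewrite chainR_affine ?chainR_cst ?mul1r //; last exact: admissible_cst.
  by apply => p; rewrite mul1r; have /andP[] := sg p.
have := ler_norm (chainR xi k s - chainR xi' k s).
have := ler_norm (chainR xi' k s - chainR xi k s); rewrite distrC.
have := lo xi; have := lo xi'; have := hi xi; have := hi xi'.
rewrite ler_norml; lra.
Qed.

Lemma chainR_last_diff_le xi xi' i (G : X -> R) C dd N :
  measurable_fun [set: X] G -> (forall y, `|G y| <= C) -> 0 < C -> (0 < N)%N ->
  (forall A, measurable A ->
    `|chainR xi i (fun p => \1_A (last z p)) -
      chainR xi' i (fun p => \1_A (last z p))| <= dd) ->
  `|chainR xi i (fun p => G (last z p)) - chainR xi' i (fun p => G (last z p))|
    <= 2 * C * dd + 2 * C / N%:R.
Proof.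
move=> mG GC C0 N0 hA; have N0' : (0 : R) < N%:R by rewrite ltr0n.
set del := 2 * C / N%:R.
have del0 : 0 < del by rewrite divr_gt0 // mulr_gt0.
have Ndel : N%:R * del = 2 * C by rewrite /del mulrC divfK // gt_eqF.
pose A j := G @^-1` `](- C + (j.+1)%:R * del), +oo[.
have mA j : measurable (A j) by rewrite -[A j]setTI; exact: mG.
pose F j p : R := \1_(A j) (last z p).
have aF j : admissible (F j) by exact/admissible_last/bounded_measurable_indic.
have aG : admissible (fun p => G (last z p)).
  by apply: admissible_last; split => //; exists C.
pose s p := - C + \sum_(j < N) del * F j p.
apply: le_trans (chainR_sandwich xi xi' i (s := s) _ _ _) _.
- exact: (@admissible_lincomb (- C) (fun=> del) F aF N).
- exact: aG.
- move=> p; rewrite /s (_ : \sum_(j < N) _ =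
      del * staircase N ((G (last z p) + C) / del)).
    by apply: staircase_approx; rewrite ?Ndel.
  rewrite /staircase mulr_sumr; apply: eq_bigr => j _; congr (_ * _).
  rewrite /F indicE ltr_pdivlMr // -ltrBlDr [_ - C]addrC.
  congr (nat_of_bool _)%:R.
  apply/idP/idP => [/set_mem|lt]; last exact/mem_set/andP.
  by rewrite /A /= in_itv /= andbT.
rewrite lerD2r /s !(chainR_lincomb (- C) (fun=> del) aF).
rewrite opprD addrACA subrr add0r -sumrB.
apply: le_trans (ler_norm_sum _ _ _) _.
apply: le_trans (_ : \sum_(j < N) del * dd <= _).
  apply: ler_sum => j _; rewrite -mulrBr normrM gtr0_norm //.
  by rewrite ler_wpM2l ?hA // ltW.
by rewrite sumr_const card_ord -mulrnAl -mulr_natl Ndel.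
Qed.

Lemma chainR_last_dTV xi xi' i (G : X -> R) C :
  measurable_fun [set: X] G -> (forall y, `|G y| <= C) ->
  ((`|chainR xi i (fun p => G (last z p)) -
      chainR xi' i (fun p => G (last z p))|)%:E
    <= (2 * C)%:E * dTV (lawX P xi i) (lawX P xi' i))%E.
Proof.
move=> mG GC; set D := dTV _ _.
have C0 : 0 <= C := le_trans (normr_ge0 _) (GC z).
have [C_eq0|C_neq0] := eqVneq C 0.
  have -> : (fun p => G (last z p)) = fun _ => 0.
    by apply/funext => p; apply/eqP; rewrite -normr_le0 -C_eq0 GC.
  by rewrite !chainR_cst subrr normr0 C_eq0 mulr0 mul0e.
have {C0 C_neq0}C0 : 0 < C by rewrite lt0r C_neq0.
have hA A : measurable A ->
    ((`|chainR xi i (fun p => \1_A (last z p)) -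
        chainR xi' i (fun p => \1_A (last z p))|)%:E <= D)%E.
  by move=> mA; apply: ereal_sup_ubound; exists A => //; rewrite !lawX_chainR.
have : (0 <= D)%E := dTV_ge0 _ _.
case: D hA => [dd| |] // hA _; last first.
  by rewrite gt0_muley ?lte_fin ?mulr_gt0 // leey.
rewrite -EFinM lee_fin; apply/ler_addgt0Pr => e e0.
have hA' A : measurable A -> `|chainR xi i (fun p => \1_A (last z p)) -
    chainR xi' i (fun p => \1_A (last z p))| <= dd.
  by move=> mA; rewrite -lee_fin; exact: hA.
have := truncnS_gt (2 * C / e); rewrite ltr_pdivrMr // => CN.
have N0 := ltn0Sn (Num.Def.trunc (2 * C / e)).
apply: le_trans (chainR_last_diff_le mG GC C0 N0 hA') _.
by rewrite lerD2l ler_pdivrMr ?ltr0n // [e * _]mulrC ltW.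
Qed.

End path_functions.

Section hybrid.
Context d (X : measurableType d) (R : realType).
Variable P : R.-pker X ~> X.
Local Notation z := (point : X).
Variables (n : nat) (c : 'I_n -> R) (h : n.-tuple X -> R).
Hypothesis mh : measurable_fun [set: n.-tuple X] h.
Hypothesis h_osc : forall x y : n.-tuple X,
  `|h x - h y| <= \sum_(i < n) c i * (tnth x i != tnth y i)%:R.

Definition hybrid i (p : seq X) : R :=
  h [tuple if (j < i)%N then z else nth z p j | j < n].

Definition hybrid_diff i p := hybrid i p - hybrid i.+1 p.

Lemma norm_h_le t : `|h t| <= `|h [tuple z | j < n]| + \sum_(i < n) `|c i|.
Proof.
rewrite -[h t](subrK (h [tuple z | j < n])); apply: le_trans (ler_normD _ _) _.
rewrite addrC lerD2l; apply: le_trans (h_osc _ _) _.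
by apply: ler_sum => j _; case: (_ != _); rewrite ?mulr1 ?mulr0 ?ler_norm.
Qed.

Lemma admissible_hybrid i : admissible (hybrid i).
Proof.
split.
  move=> m; apply: measurableT_comp mh _; apply/measurable_fun_tnthP => j.
  rewrite (_ : _ \o _ =
      fun t : m.-tuple X => if (j < i)%N then z else nth z t j).
    by case: (j < i)%N; [exact: measurable_cst | exact: measurable_nth_tuple].
  by apply/funext => t /=; rewrite tnth_mktuple.
by exists (`|h [tuple z | j < n]| + \sum_(i < n) `|c i|) => p; exact: norm_h_le.
Qed.

Lemma admissible_hybrid_diff i : admissible (hybrid_diff i).
Proof.
rewrite (_ : hybrid_diff i = fun p => -1 * hybrid i.+1 p + hybrid i p).
  exact/admissible_affine/admissible_hybrid/admissible_hybrid.
by apply/funext => p; rewrite mulN1r addrC.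
Qed.

Lemma hybrid_diff_bound (i : 'I_n) p : 0 <= c i -> `|hybrid_diff i p| <= c i.
Proof.
move=> ci0; apply: le_trans (h_osc _ _) _; rewrite (bigD1 i) //= big1 ?addr0.
  by rewrite !tnth_mktuple ltnn ltnSn; case: (_ != _); rewrite ?mulr1 ?mulr0.
move=> j ji; have /negbTE ji_nat : val j != val i := ji.
by rewrite !tnth_mktuple ltnS [(j <= i)%N]leq_eqVlt ji_nat eqxx mulr0.
Qed.

Lemma hybrid_prefix_indep i j p p' q : (i <= j)%N ->
  size p = i -> size p' = i -> hybrid j (p ++ q) = hybrid j (p' ++ q).
Proof.
move=> ij sp sp'; congr h; apply: eq_mktuple => k.
case: ltnP => // jk; rewrite !nth_cat sp sp'.
by rewrite ltnNge (leq_trans ij jk).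
Qed.

Lemma hybrid_n : hybrid n = fun _ => h [tuple z | j < n].
Proof.
by apply/funext => p; congr h; apply: eq_mktuple => j; rewrite ltn_ord.
Qed.

Lemma chainR_telescope xi k m :
  chainR P xi k (hybrid 0) =
  \sum_(i < m) chainR P xi k (hybrid_diff i) + chainR P xi k (hybrid m).
Proof.
elim: m => [|m IH]; first by rewrite big_ord0 add0r.
rewrite IH big_ord_recr /= -addrA; congr (_ + _).
rewrite -[chainR P xi k (hybrid_diff m)]mul1r -chainR_affine.
- by congr chainR; apply/funext => p; rewrite mul1r subrK.
- exact: admissible_hybrid_diff.
- exact: admissible_hybrid.
Qed.

(* The conditional expectation of [hybrid_diff i (X_0, ..., X_{n-1})] given
   [X_i = y]; the states before time [i] are irrelevant, so they are set to
   [z]. *)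
Definition cond_hybrid_diff i (y : X) : R :=
  steps P (n.-1 - i) (hybrid_diff i) (nseq i z ++ [:: y]).

Lemma measurable_cond_hybrid_diff i :
  measurable_fun [set: X] (cond_hybrid_diff i).
Proof.
have [mF _] := admissible_steps P (n.-1 - i) (admissible_hybrid_diff i).
have mt : measurable_fun [set: X] (fun y : X => [tuple of nseq i z ++ [:: y]]).
  apply: measurable_fun_tuple => j /=; rewrite addn1 ltnS leq_eqVlt.
  case/predU1P => [->|ji].
    rewrite (_ : (fun y => _) = id); first exact: measurable_id.
    by apply/funext => y; rewrite nth_cat size_nseq ltnn subnn.
  rewrite (_ : (fun y => _) = cst z); first exact: measurable_cst.
  by apply/funext => y; rewrite nth_cat size_nseq ji nth_nseq ji.
exact: measurableT_comp (mF (i + 1)%N) mt.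
Qed.

Lemma cond_hybrid_diff_bound (i : 'I_n) y : 0 <= c i ->
  `|cond_hybrid_diff i y| <= c i.
Proof.
move=> ci0; apply: steps_bound; first exact: admissible_hybrid_diff.
by move=> q; exact: hybrid_diff_bound.
Qed.

Lemma chainR_hybrid_diff xi (i : 'I_n) :
  chainR P xi n.-1 (hybrid_diff i) =
  chainR P xi i (fun p => cond_hybrid_diff i (last z p)).
Proof.
have i_le : (i <= n.-1)%N by rewrite -ltnS prednK ?(leq_ltn_trans _ (ltn_ord i)).
rewrite /chainR; congr Rintegral; apply/funext => x.
rewrite -[in steps _ n.-1](subnKC i_le) /steps iterD.
apply: steps_local => q; rewrite /= add1n => size_q.
have [y q_y] : exists y, q = take i q ++ [:: y].
  exists (nth z q i).
  by rewrite cats1 -take_nth ?size_q // take_oversize ?size_q.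
rewrite /cond_hybrid_diff q_y last_cat /=.
apply: (@steps_prefix_indep _ _ _ P _ _ i) => //.
- move=> p p' r sp sp'; rewrite /hybrid_diff.
  rewrite (hybrid_prefix_indep _ (leqnn i) sp sp').
  by rewrite (hybrid_prefix_indep _ (leqnSn i) sp sp').
- by rewrite size_take size_q ltnSn.
- by rewrite size_nseq.
Qed.

Lemma chainR_hybrid_bound xi xi' : (forall i, 0 <= c i) ->
  ((`|chainR P xi n.-1 (hybrid 0) - chainR P xi' n.-1 (hybrid 0)|)%:E <=
   2%:E * \sum_(i < n) ((c i)%:E * dTV (lawX P xi i) (lawX P xi' i)))%E.
Proof.
move=> c_ge0.
rewrite (chainR_telescope xi n.-1 n) (chainR_telescope xi' n.-1 n).
rewrite hybrid_n !chainR_cst opprD addrACA subrr addr0 -sumrB.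
apply: le_trans (_ : ((\sum_(i < n) `|chainR P xi n.-1 (hybrid_diff i) -
    chainR P xi' n.-1 (hybrid_diff i)|)%:E <= _))%E.
  by rewrite lee_fin; exact: ler_norm_sum.
rewrite -sumEFin ge0_sume_distrr; last first.
  by move=> i _; apply: mule_ge0; [rewrite lee_fin | exact: dTV_ge0].
apply: lee_sum => i _; rewrite muleA -EFinM !chainR_hybrid_diff.
apply: chainR_last_dTV; first exact: measurable_cond_hybrid_diff.
by move=> y; exact: cond_hybrid_diff_bound.
Qed.

Lemma chainE_tuple_hybrid xi : (0 < n)%N ->
  chainE_tuple P xi h = (chainR P xi n.-1 (hybrid 0))%:E.
Proof.
move=> n0; apply: chainE_chainR; first exact: admissible_hybrid.
move=> p; rewrite prednK // => size_p; congr (h _)%:E.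
apply: eq_from_tnth => j; rewrite tnth_mktuple (tnth_nth z) insubdK //.
by rewrite unfold_in /= size_p.
Qed.

End hybrid.

Theorem lemma1 (d : measure_display) (X : measurableType d) (R : realType)
  (P : R.-pker X ~> X) (xi xi' : probability X R) (n : nat) (hn : (0 < n)%N)
  (c : 'I_n -> R) (hc : forall i, 0 <= c i)
  (h : n.-tuple X -> R) (mh : measurable_fun [set: n.-tuple X] h)
  (hosc : forall x y : n.-tuple X,
     `| h x - h y | <= \sum_(i < n) c i * (tnth x i != tnth y i)%:R) :
  (`| chainE_tuple P xi h - chainE_tuple P xi' h |
    <= 2%:E * \sum_(i < n) ((c i)%:E * dTV (lawX P xi i) (lawX P xi' i)))%E.
Proof.
rewrite !(chainE_tuple_hybrid P mh hosc) // -EFinB.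
exact: chainR_hybrid_bound.
Qed.
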